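(* Let $(\mathbf a,b)\in\mathbb{Z}^2\times\mathbb{N}$ with $\gcd(\mathbf a,b)=1$ (i.e. $\gcd(a_1,a_2,b)=1$), and let $\boldsymbol\beta\in\mathbb{R}^2$. Then there is an absolute constant $C>0$ such that for all $0<\varepsilon<1$, $$\sum_{0\le h\le b-1}\mathbb 1\left[\left\|h\tfrac{\mathbf a}{b}+\boldsymbol\beta\right\|<\varepsilon\right]\le C(\varepsilon b+1),$$ and for all $N\ge1$ (and $0<\varepsilon<1$), $$\sum_{1\le h\le N}\mathbb 1\left[\left\|h\tfrac{\mathbf a}{b}\right\|<\varepsilon\right]\le C\left((\varepsilon b+1)\frac{N}{b}\mathbb 1[N\ge b]+\min\{N,\varepsilon b\}\mathbb 1[N<b]\right).$$
   Context: $\|\mathbf x\|$ denotes the distance from $\mathbf x\in\mathbb{R}^2$ to the nearest point of $\mathbb{Z}^2$ with respect to the maximum norm; $\mathbb 1[\cdot]$ is the indicator of a condition. *)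

From Stdlib Require Import Reals Lra Lia ZArith List.
Open Scope R_scope.

Definition dist_Z (t : R) : R :=
  Rmin (t - IZR (Int_part t)) (IZR (Int_part t) + 1 - t).

(* ||x|| for x = (x1,x2) in R^2 : distance to the nearest point of Z^2 w.r.t.
   the maximum norm; this is the max of the coordinatewise distances. *)
Definition torus_norm (x1 x2 : R) : R := Rmax (dist_Z x1) (dist_Z x2).

Definition ind_lt (u v : R) : R := if Rlt_dec u v then 1 else 0.

Definition sumR (l : list nat) (f : nat -> R) : R :=
  fold_right Rplus 0 (map f l).

(* For h in a window of b consecutive integers with ||h a/b + beta|| < eps, write
   h a_i = j_i b + v_i with j_i the integer nearest to h a_i/b + beta_i; the integer
   vector (v_1, v_2) then lies in a square of side 2 eps b centred at -b beta.
   With d = gcd(a_1, b) and n = b/d, v_1 is a multiple of d, v_1 determines h mod n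
   and hence v_2 mod n, and (v_1, v_2) determines h mod b because gcd(a, b) = 1.
   So h |-> (v_1/d, floor(v_2/n)) is injective on the window and takes at most
   (2 eps b/d + 1)(2 eps b/n + 2) <= 10 eps b + 2 values.  Longer ranges are cut
   into windows, and for eps b <= 1 no 0 < h < b counts since ||h a/b|| >= 1/b. *)

From Stdlib Require Import Reals ZArith List Lia Lra.
Open Scope R_scope.

Definition near_int (eps x : R) : Z :=
  if Rlt_dec (x - IZR (Int_part x)) eps then Int_part x else (Int_part x + 1)%Z.

Lemma near_int_spec eps x : dist_Z x < eps -> Rabs (x - IZR (near_int eps x)) < eps.
Proof.
  unfold dist_Z, near_int, Rmin; intros Hx.
  destruct (base_Int_part x) as [Hfl Hfl1].
  apply Rabs_def1; destruct Rlt_dec, Rle_dec; rewrite ?plus_IZR in *; lra.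
Qed.

Lemma near_int_scaled_bound eps x (b : nat) :
  (0 < b)%nat -> dist_Z x < eps ->
  Rabs (INR b * x - IZR (near_int eps x * Z.of_nat b)) < eps * INR b.
Proof.
  intros Hb Hx; apply near_int_spec in Hx.
  assert (Bp : 0 < INR b) by (apply lt_0_INR; lia).
  rewrite mult_IZR, <- INR_IZR_INZ.
  replace (INR b * x - IZR (near_int eps x) * INR b)
    with (INR b * (x - IZR (near_int eps x))) by ring.
  rewrite Rabs_mult, Rabs_pos_eq by lra; nra.
Qed.

Lemma divide_of_dist_Z_frac_lt (k : Z) (b : nat) :
  (0 < b)%nat -> dist_Z (IZR k / INR b) < / INR b -> (Z.of_nat b | k)%Z.
Proof.
  intros Hb Hk.
  assert (Bp : 0 < INR b) by (apply lt_0_INR; lia).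
  apply (near_int_scaled_bound _ _ b Hb), Rabs_def2 in Hk.
  replace (INR b * (IZR k / INR b)) with (IZR k) in Hk by (field; lra).
  rewrite Rinv_l, <- minus_IZR in Hk by lra.
  set (j := near_int _ _) in Hk.
  assert (-1 < k - j * Z.of_nat b < 1)%Z by (split; apply lt_IZR; simpl; lra).
  exists j; lia.
Qed.

Lemma Z_divide_of_gcd2 (a1 a2 b x : Z) : Z.gcd (Z.gcd a1 a2) b = 1%Z ->
  (b | x * a1)%Z -> (b | x * a2)%Z -> (b | x)%Z.
Proof.
  intros G H1 H2; destruct (Z.gcd_bezout a1 a2 _ eq_refl) as [u [v Huv]].
  apply Z.gauss with (Z.gcd a1 a2); [|now rewrite Z.gcd_comm].
  rewrite <- Huv.
  replace ((u * a1 + v * a2) * x)%Z with (u * (x * a1) + v * (x * a2))%Z by ring.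
  apply Z.divide_add_r; apply Z.divide_mul_r; assumption.
Qed.

Lemma Z_divide_cofactor (a b x : Z) : b <> 0%Z ->
  (b | x * a)%Z -> (b / Z.gcd a b | x)%Z.
Proof.
  intros Hb Hxa.
  assert (Hg : Z.gcd a b <> 0%Z) by (intro E; apply Z.gcd_eq_0 in E; lia).
  destruct (Z.gcd_divide_l a b) as [a' Ea].
  destruct (Z.gcd_divide_r a b) as [n En].
  assert (Hn : (b / Z.gcd a b = n)%Z) by (rewrite En at 1; apply Z.div_mul, Hg).
  assert (Ha' : (a / Z.gcd a b = a')%Z) by (rewrite Ea at 1; apply Z.div_mul, Hg).
  assert (Hcop : Z.gcd n a' = 1%Z)
    by (rewrite <- Hn, <- Ha', Z.gcd_comm; now apply Z.gcd_div_gcd).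
  rewrite Hn; apply Z.gauss with a'; [|exact Hcop].
  apply (Z.mul_divide_cancel_r _ _ (Z.gcd a b) Hg).
  replace (a' * x * Z.gcd a b)%Z with (x * (a' * Z.gcd a b))%Z by ring.
  now rewrite <- En, <- Ea.
Qed.

Lemma Z_eq_of_div_eq (n x y : Z) : (0 < n)%Z ->
  (x / n = y / n)%Z -> (n | x - y)%Z -> x = y.
Proof.
  intros Hn Hdiv [k Hk].
  assert (Hmod : (x mod n = y mod n)%Z).
  { replace x with (y + k * n)%Z by lia; apply Z_mod_plus_full. }
  rewrite (Z.div_mod x n), (Z.div_mod y n), Hdiv, Hmod by lia; reflexivity.
Qed.

Lemma window_eq_of_divide (b c h h' : nat) :
  (c <= h < c + b)%nat -> (c <= h' < c + b)%nat ->
  (Z.of_nat b | Z.of_nat h - Z.of_nat h')%Z -> h = h'.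
Proof. intros Hh Hh' [k Hk]; assert (k = 0%Z) by nia; subst k; lia. Qed.

Definition ints_between (lo hi : R) : list Z :=
  map (fun k => (up lo + Z.of_nat k)%Z) (seq 0 (Z.to_nat (up hi - up lo))).

Lemma In_ints_between lo hi t : lo < IZR t -> IZR t < hi -> In t (ints_between lo hi).
Proof.
  intros Hlo Hhi.
  destruct (archimed lo) as [A1 A2], (archimed hi) as [B1 B2].
  assert (t > up lo - 1)%Z by (apply Z.lt_gt, lt_IZR; rewrite minus_IZR; simpl; lra).
  assert (t < up hi)%Z by (apply lt_IZR; lra).
  apply in_map_iff; exists (Z.to_nat (t - up lo)); split; [lia|].
  apply in_seq; lia.
Qed.

Lemma In_ints_between_scaled s lo hi t :
  0 < s -> lo < s * IZR t < hi -> In t (ints_between (lo / s) (hi / s)).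
Proof.
  intros Hs [Hlo Hhi]; apply In_ints_between;
    apply Rmult_lt_reg_l with s; trivial;
    [replace (s * (lo / s)) with lo | replace (s * (hi / s)) with hi];
    trivial; field; lra.
Qed.

Lemma length_ints_between lo hi :
  lo <= hi -> INR (length (ints_between lo hi)) <= hi - lo + 1.
Proof.
  intros H; unfold ints_between; rewrite length_map, length_seq.
  destruct (archimed lo) as [A1 A2], (archimed hi) as [B1 B2].
  destruct (Z_lt_le_dec 0 (up hi - up lo)).
  - rewrite INR_IZR_INZ, Z2Nat.id, minus_IZR by lia; lra.
  - replace (Z.to_nat (up hi - up lo)) with 0%nat by lia; simpl; lra.
Qed.

Definition Rltb (u v : R) : bool := if Rlt_dec u v then true else false.

Lemma sumR_ind_lt (l : list nat) (g : nat -> R) eps :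
  sumR l (fun h => ind_lt (g h) eps) = INR (length (filter (fun h => Rltb (g h) eps) l)).
Proof.
  induction l as [|x l IH]; [reflexivity|].
  unfold sumR, ind_lt, Rltb in *; simpl; rewrite IH.
  destruct Rlt_dec; simpl length; rewrite ?S_INR; lra.
Qed.

Lemma length_filter_seq_le (P : nat -> bool) c L M : (L <= M)%nat ->
  (length (filter P (seq c L)) <= length (filter P (seq c M)))%nat.
Proof.
  intros HLM; replace M with (L + (M - L))%nat by lia.
  rewrite seq_app, filter_app, length_app; lia.
Qed.

Lemma length_filter_seq_blocks (P : nat -> bool) (b : nat) (K : R) : (0 < b)%nat ->
  (forall c, INR (length (filter P (seq c b))) <= K) ->
  forall L c, INR (length (filter P (seq c L))) <= (INR L / INR b + 1) * K.
Proof.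
  intros Hb HK.
  assert (Bp : 0 < INR b) by (apply lt_0_INR; lia).
  assert (K0 : 0 <= K) by (eapply Rle_trans, (HK 0%nat); apply pos_INR).
  assert (Lb0 : forall L, 0 <= INR L / INR b)
    by (intro; apply Rmult_le_pos; [apply pos_INR | left; apply Rinv_0_lt_compat; lra]).
  intros L; induction L as [L IH] using (well_founded_induction lt_wf); intros c.
  destruct (le_lt_dec L b) as [Hl|Hl].
  - eapply Rle_trans; [apply le_INR, (length_filter_seq_le _ c L b Hl)|].
    specialize (Lb0 L); specialize (HK c); nra.
  - replace L with (b + (L - b))%nat by lia.
    rewrite seq_app, filter_app, length_app, plus_INR.
    specialize (IH (L - b)%nat ltac:(lia) (c + b)%nat); specialize (HK c).
    replace (INR (b + (L - b)) / INR b + 1) with (1 + (INR (L - b) / INR b + 1))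
      by (rewrite plus_INR; field; lra).
    nra.
Qed.

Lemma box_size_bound d n e : 1 <= d -> 1 <= n -> 0 <= e <= d * n ->
  (2 * (e / d) + 1) * (2 * (e / n) + 2) <= 10 * e + 2.
Proof.
  intros Hd Hn He.
  assert (Hp : 0 <= e / d <= e).
  { split; [apply Rmult_le_pos; [lra | left; apply Rinv_0_lt_compat; lra]|].
    apply Rmult_le_reg_r with d; [lra|]; unfold Rdiv; rewrite Rmult_assoc, Rinv_l; nra. }
  assert (Hq : 0 <= e / n <= e).
  { split; [apply Rmult_le_pos; [lra | left; apply Rinv_0_lt_compat; lra]|].
    apply Rmult_le_reg_r with n; [lra|]; unfold Rdiv; rewrite Rmult_assoc, Rinv_l; nra. }
  assert (Hpq : (e / d) * (e / n) <= e).
  { replace ((e / d) * (e / n)) with (e * (e / (d * n))) by (field; lra).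
    assert (e / (d * n) <= 1); [|nra].
    apply Rmult_le_reg_r with (d * n); [nra|]; unfold Rdiv;
      rewrite Rmult_assoc, Rinv_l; nra. }
  nra.
Qed.

Section Window.

Variables (a1 a2 : Z) (b : nat) (beta1 beta2 eps : R).
Hypothesis b_gt0 : (0 < b)%nat.
Hypothesis gcd_a_b : Z.gcd (Z.gcd a1 a2) (Z.of_nat b) = 1%Z.
Hypothesis eps_ge0 : 0 <= eps.
Hypothesis eps_le1 : eps <= 1.

Definition orbit_close (h : nat) : bool :=
  Rltb (torus_norm (INR h * IZR a1 / INR b + beta1) (INR h * IZR a2 / INR b + beta2)) eps.

Definition offset (a : Z) (beta : R) (h : nat) : Z :=
  (Z.of_nat h * a - near_int eps (INR h * IZR a / INR b + beta) * Z.of_nat b)%Z.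

Lemma offset_bound a beta h : dist_Z (INR h * IZR a / INR b + beta) < eps ->
  Rabs (IZR (offset a beta h) + INR b * beta) < eps * INR b.
Proof.
  intros Hx; apply (near_int_scaled_bound _ _ b b_gt0) in Hx.
  assert (Bp : 0 < INR b) by (apply lt_0_INR; lia).
  set (x := INR h * IZR a / INR b + beta) in *.
  set (j := near_int eps x) in *.
  unfold offset; fold x j.
  replace (IZR (Z.of_nat h * a - j * Z.of_nat b) + INR b * beta)
    with (INR b * x - IZR (j * Z.of_nat b)); [exact Hx|].
  unfold x; rewrite minus_IZR, !mult_IZR, <- !INR_IZR_INZ; field; lra.
Qed.

Lemma offset_sub_divide a beta h h' :
  (Z.of_nat b | (Z.of_nat h - Z.of_nat h') * a - (offset a beta h - offset a beta h'))%Z.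
Proof.
  exists (near_int eps (INR h * IZR a / INR b + beta)
          - near_int eps (INR h' * IZR a / INR b + beta))%Z.
  unfold offset; ring.
Qed.

Local Notation d := (Z.gcd a1 (Z.of_nat b)).
Local Notation n := (Z.of_nat b / Z.gcd a1 (Z.of_nat b))%Z.

Lemma d_gt0 : (0 < d)%Z.
Proof.
  assert (d <> 0%Z) by (intro E; apply Z.gcd_eq_0 in E; lia).
  pose proof (Z.gcd_nonneg a1 (Z.of_nat b)); lia.
Qed.

Lemma b_eq_d_mul_n : Z.of_nat b = (d * n)%Z.
Proof.
  pose proof d_gt0.
  apply Z.div_exact; [lia|].
  apply Z.mod_divide; [lia | apply Z.gcd_divide_r].
Qed.

Lemma n_gt0 : (0 < n)%Z.
Proof. pose proof d_gt0; pose proof b_eq_d_mul_n; nia. Qed.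

Lemma d_divide_offset h : (d | offset a1 beta1 h)%Z.
Proof.
  unfold offset; apply Z.divide_sub_r; apply Z.divide_mul_r;
    [apply Z.gcd_divide_l | apply Z.gcd_divide_r].
Qed.

Definition key (h : nat) : Z * Z :=
  (offset a1 beta1 h / d, offset a2 beta2 h / n)%Z.

Lemma key_inj c h h' : (c <= h < c + b)%nat -> (c <= h' < c + b)%nat ->
  key h = key h' -> h = h'.
Proof.
  intros Hh Hh' E; injection E as E1 E2.
  set (dh := (Z.of_nat h - Z.of_nat h')%Z).
  assert (O1 : offset a1 beta1 h = offset a1 beta1 h').
  { apply (Z_eq_of_div_eq d); [apply d_gt0 | exact E1|].
    apply Z.divide_sub_r; apply d_divide_offset. }
  assert (D1 : (Z.of_nat b | dh * a1)%Z).
  { generalize (offset_sub_divide a1 beta1 h h').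
    now rewrite O1, Z.sub_diag, Z.sub_0_r. }
  assert (O2 : offset a2 beta2 h = offset a2 beta2 h').
  { apply (Z_eq_of_div_eq n); [apply n_gt0 | exact E2|].
    replace (offset a2 beta2 h - offset a2 beta2 h')%Z
      with (dh * a2 - (dh * a2 - (offset a2 beta2 h - offset a2 beta2 h')))%Z by ring.
    apply Z.divide_sub_r.
    - apply Z.divide_mul_l, Z_divide_cofactor; [lia | exact D1].
    - apply Z.divide_trans with (Z.of_nat b);
        [exists d; exact b_eq_d_mul_n | apply offset_sub_divide]. }
  assert (D2 : (Z.of_nat b | dh * a2)%Z).
  { generalize (offset_sub_divide a2 beta2 h h').
    now rewrite O2, Z.sub_diag, Z.sub_0_r. }
  apply (window_eq_of_divide b c); trivial.
  exact (Z_divide_of_gcd2 a1 a2 _ _ gcd_a_b D1 D2).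
Qed.

Definition box1 : list Z :=
  ints_between ((- (INR b * beta1) - eps * INR b) / IZR d)
               ((- (INR b * beta1) + eps * INR b) / IZR d).

(* [offset a2 beta2 h / n] is a floor quotient, hence the extra [- n] at the lower end. *)
Definition box2 : list Z :=
  ints_between ((- (INR b * beta2) - eps * INR b - IZR n) / IZR n)
               ((- (INR b * beta2) + eps * INR b) / IZR n).

Lemma key_in_box h : orbit_close h = true -> In (key h) (list_prod box1 box2).
Proof.
  unfold orbit_close, Rltb; destruct Rlt_dec as [T|]; [intros _ | discriminate].
  apply Rmax_Rlt in T; destruct T as [T1 T2].
  apply offset_bound, Rabs_def2 in T1; apply offset_bound, Rabs_def2 in T2.
  pose proof d_gt0; pose proof n_gt0.
  apply in_prod; apply In_ints_between_scaled.
  - apply IZR_lt; assumption.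
  - assert (Hd0 : d <> 0%Z) by lia.
    rewrite <- mult_IZR, <- (proj2 (Z.div_exact _ _ Hd0)
      (proj2 (Z.mod_divide _ _ Hd0) (d_divide_offset h))); lra.
  - apply IZR_lt; assumption.
  - set (v := offset a2 beta2 h) in *.
    assert (M := Z.mod_pos_bound v n n_gt0).
    assert (R0 : 0 <= IZR (v mod n)) by (apply IZR_le; lia).
    assert (R1 : IZR (v mod n) < IZR n) by (apply IZR_lt; lia).
    assert (DM : IZR v = IZR n * IZR (v / n) + IZR (v mod n)).
    { rewrite <- mult_IZR, <- plus_IZR; f_equal; apply Z.div_mod; lia. }
    lra.
Qed.

Lemma length_box : INR (length (list_prod box1 box2)) <= 10 * (eps * INR b) + 2.
Proof.
  pose proof d_gt0; pose proof n_gt0.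
  assert (Hd : 1 <= IZR d) by (apply IZR_le; lia).
  assert (Hn : 1 <= IZR n) by (apply IZR_le; lia).
  assert (Hb : INR b = IZR d * IZR n)
    by (rewrite INR_IZR_INZ, <- mult_IZR, <- b_eq_d_mul_n; reflexivity).
  assert (He : 0 <= eps * INR b) by (apply Rmult_le_pos; [lra | apply pos_INR]).
  assert (L1 : INR (length box1) <= 2 * (eps * INR b / IZR d) + 1).
  { unfold box1; eapply Rle_trans; [apply length_ints_between | right; field; lra].
    unfold Rdiv; apply Rmult_le_compat_r; [left; apply Rinv_0_lt_compat|]; lra. }
  assert (L2 : INR (length box2) <= 2 * (eps * INR b / IZR n) + 2).
  { unfold box2; eapply Rle_trans; [apply length_ints_between | right; field; lra].
    unfold Rdiv; apply Rmult_le_compat_r; [left; apply Rinv_0_lt_compat|]; lra. }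
  rewrite length_prod, mult_INR.
  eapply Rle_trans;
    [apply Rmult_le_compat; [apply pos_INR | apply pos_INR | exact L1 | exact L2]|].
  apply box_size_bound; try lra.
  split; [exact He|]; rewrite <- Hb; pose proof (pos_INR b); nra.
Qed.

Lemma count_window c : INR (length (filter orbit_close (seq c b))) <= 10 * (eps * INR b) + 2.
Proof.
  eapply Rle_trans; [|apply length_box].
  apply le_INR; rewrite <- (length_map key).
  apply NoDup_incl_length.
  - apply NoDup_map_NoDup_ForallPairs; [|apply NoDup_filter, seq_NoDup].
    intros h h' Hh Hh'; apply filter_In in Hh, Hh'.
    destruct Hh as [Hh _], Hh' as [Hh' _]; apply in_seq in Hh, Hh'.
    apply (key_inj c); lia.
  - intros p Hp; apply in_map_iff in Hp; destruct Hp as [h [<- Hh]].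
    apply filter_In in Hh; apply key_in_box; tauto.
Qed.

End Window.

Lemma orbit_norm_ge (a1 a2 : Z) (b h : nat) :
  (0 < h < b)%nat -> Z.gcd (Z.gcd a1 a2) (Z.of_nat b) = 1%Z ->
  / INR b <= torus_norm (INR h * IZR a1 / INR b) (INR h * IZR a2 / INR b).
Proof.
  intros Hh G.
  apply Rnot_lt_le; intro T.
  assert (E : forall a, INR h * IZR a = IZR (Z.of_nat h * a))
    by (intro; rewrite mult_IZR, <- INR_IZR_INZ; reflexivity).
  rewrite !E in T; apply Rmax_Rlt in T; destruct T as [T1 T2].
  apply divide_of_dist_Z_frac_lt in T1, T2; try lia.
  assert (D := Z_divide_of_gcd2 a1 a2 _ _ G T1 T2).
  apply Z.divide_pos_le in D; lia.
Qed.

Section Homogeneous.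

Variables (a1 a2 : Z) (b : nat) (eps : R).
Hypothesis b_gt0 : (0 < b)%nat.
Hypothesis gcd_a_b : Z.gcd (Z.gcd a1 a2) (Z.of_nat b) = 1%Z.
Hypothesis eps_ge0 : 0 <= eps.
Hypothesis eps_le1 : eps <= 1.

Local Notation close := (orbit_close a1 a2 b 0 0 eps).

Lemma orbit_close_small_eps h : (0 < h < b)%nat -> eps * INR b <= 1 -> close h = false.
Proof.
  intros Hh Hsmall.
  assert (Bp : 0 < INR b) by (apply lt_0_INR; lia).
  assert (eps <= / INR b).
  { apply Rmult_le_reg_r with (INR b); [lra|]; rewrite Rinv_l; lra. }
  pose proof (orbit_norm_ge a1 a2 b h Hh gcd_a_b).
  unfold orbit_close, Rltb; rewrite !Rplus_0_r.
  destruct Rlt_dec; [lra | reflexivity].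
Qed.

Lemma count_orbit_long N : (b <= N)%nat ->
  INR (length (filter close (seq 1 N))) <= 20 * ((eps * INR b + 1) * (INR N / INR b)).
Proof.
  intros HN.
  assert (Bp : 0 < INR b) by (apply lt_0_INR; lia).
  assert (He : 0 <= eps * INR b) by nra.
  assert (1 <= INR N / INR b).
  { apply Rmult_le_reg_r with (INR b); [lra|]; unfold Rdiv.
    rewrite Rmult_assoc, Rinv_l, Rmult_1_r, Rmult_1_l by lra; apply le_INR; lia. }
  pose proof (count_window a1 a2 b 0 0 eps b_gt0 gcd_a_b eps_ge0 eps_le1) as Hwin.
  eapply Rle_trans; [apply (length_filter_seq_blocks _ b _ b_gt0 Hwin)|].
  nra.
Qed.

Lemma count_orbit_short N : (N < b)%nat ->
  INR (length (filter close (seq 1 N))) <= 20 * Rmin (INR N) (eps * INR b).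
Proof.
  intros HN.
  assert (Bp : 0 < INR b) by (apply lt_0_INR; lia).
  pose proof (pos_INR N).
  destruct (Rle_lt_dec (eps * INR b) 1) as [Hsmall|Hlarge].
  - rewrite (filter_ext_in _ (fun _ => false)), filter_false.
    + simpl; unfold Rmin; destruct Rle_dec; nra.
    + intros h Hh; apply in_seq in Hh; apply orbit_close_small_eps; [lia | exact Hsmall].
  - assert (C1 : INR (length (filter close (seq 1 N))) <= INR N).
    { apply le_INR; eapply Nat.le_trans; [apply filter_length_le | now rewrite length_seq]. }
    assert (C2 : INR (length (filter close (seq 1 N))) <= 10 * (eps * INR b) + 2).
    { eapply Rle_trans; [apply le_INR, (length_filter_seq_le _ 1 N b); lia|].
      apply count_window; assumption. }
    unfold Rmin; destruct Rle_dec; lra.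
Qed.

End Homogeneous.

Theorem lemma4p2 :
  exists C : R, 0 < C /\
  forall (a1 a2 : Z) (b : nat) (beta1 beta2 : R),
    (0 < b)%nat ->
    Z.gcd (Z.gcd a1 a2) (Z.of_nat b) = 1%Z ->
    forall eps : R, 0 < eps < 1 ->
      sumR (seq 0 b)
        (fun h => ind_lt
           (torus_norm (INR h * IZR a1 / INR b + beta1)
                       (INR h * IZR a2 / INR b + beta2)) eps)
        <= C * (eps * INR b + 1)
      /\
      forall N : nat, (1 <= N)%nat ->
        sumR (seq 1 N)
          (fun h => ind_lt
             (torus_norm (INR h * IZR a1 / INR b) (INR h * IZR a2 / INR b)) eps)
          <= C * ((if Nat.leb b N then (eps * INR b + 1) * (INR N / INR b) else 0)
                  + (if Nat.ltb N b then Rmin (INR N) (eps * INR b) else 0)).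
Proof.
  exists 20; split; [lra|].
  intros a1 a2 b beta1 beta2 Hb G eps Heps.
  assert (Bp : 0 < INR b) by (apply lt_0_INR; lia).
  split.
  - rewrite sumR_ind_lt.
    eapply Rle_trans; [apply count_window; trivial; lra | nra].
  - intros N HN.
    rewrite sumR_ind_lt, (filter_ext _ (orbit_close a1 a2 b 0 0 eps))
      by (intro h; unfold orbit_close; rewrite !Rplus_0_r; reflexivity).
    destruct (Nat.leb_spec b N), (Nat.ltb_spec N b); try lia;
      rewrite ?Rplus_0_l, ?Rplus_0_r.
    + apply count_orbit_long; trivial; lra.
    + apply count_orbit_short; trivial; lra.
Qed.
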